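(* Let $(X,T)$ be a topological dynamical system with metric $\rho$, and let $A\subseteq X$ be a subset with the property that for every $x\in A$ and $\epsilon>0$ there exists $y\in A$ such that $\{n\in\mathbb Z:\rho(T^ny,x)<\epsilon\}$ is piecewise syndetic. Then for every $\epsilon>0$ there exists $z\in A$ such that $\{n\in\mathbb Z:\rho(T^nz,z)<\epsilon\}$ is piecewise syndetic.
   Context: A topological dynamical system is $(X,T)$ with $X$ compact metric and $T$ a homeomorphism. $S\subseteq\mathbb Z$ is syndetic if it has bounded gaps, thick if it contains arbitrarily long runs of consecutive integers, piecewise syndetic if it is the intersection of a syndetic and a thick set. *)

From Stdlib Require Import Reals ZArith.
Open Scope R_scope.

Record is_metric {X : Type} (d : X -> X -> R) : Prop := {
  metric_nonneg : forall x y, 0 <= d x y;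
  metric_eq0 : forall x y, d x y = 0 <-> x = y;
  metric_sym : forall x y, d x y = d y x;
  metric_tri : forall x y z, d x z <= d x y + d y z }.

Definition metric_continuous {X : Type} (d : X -> X -> R) (f : X -> X) : Prop :=
  forall x eps, 0 < eps -> exists del, 0 < del /\
    forall y, d x y < del -> d (f x) (f y) < eps.

(* Compactness of the metric space (sequential compactness, equivalent
   to compactness for metric spaces). *)
Definition metric_compact {X : Type} (d : X -> X -> R) : Prop :=
  forall u : nat -> X, exists (phi : nat -> nat) (l : X),
    (forall n m, (n < m)%nat -> (phi n < phi m)%nat) /\
    forall eps, 0 < eps -> exists N, forall n, (N <= n)%nat -> d (u (phi n)) l < eps.

Definition TDS {X : Type} (d : X -> X -> R) (T Tinv : X -> X) : Prop :=
  is_metric d /\ metric_compact d /\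
  (forall x, Tinv (T x) = x) /\ (forall x, T (Tinv x) = x) /\
  metric_continuous d T /\ metric_continuous d Tinv.

Definition iterZ {X : Type} (T Tinv : X -> X) (n : Z) (x : X) : X :=
  match n with
  | Z0 => x
  | Zpos p => Nat.iter (Pos.to_nat p) T x
  | Zneg p => Nat.iter (Pos.to_nat p) Tinv x
  end.

Definition syndetic (S : Z -> Prop) : Prop :=
  exists L : Z, (0 < L)%Z /\ forall a : Z, exists n, (a <= n < a + L)%Z /\ S n.

Definition thick (S : Z -> Prop) : Prop :=
  forall L : Z, exists a : Z, forall n, (a <= n < a + L)%Z -> S n.

Definition piecewise_syndetic (S : Z -> Prop) : Prop :=
  exists S1 S2 : Z -> Prop, syndetic S1 /\ thick S2 /\
    forall n, S n <-> (S1 n /\ S2 n).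

From Stdlib Require Import Reals ZArith Lra Lia Classical ClassicalEpsilon ChoiceFacts.
Open Scope R_scope.

(** Call [z] a piecewise syndetic visitor of the [r]-ball around [x] when its
    return times to that ball form a piecewise syndetic set.  Since piecewise
    syndeticity is shift invariant, continuity of a single iterate [T^n] shows
    that if [y] visits [B(x, r)] piecewise syndetically, then so does every
    piecewise syndetic visitor of a small enough ball [B(y, d)].  Iterating
    the hypothesis on [A] with these shrinking radii produces a sequence
    [x_0, x_1, ...] in [A] in which every [x_j] visits [B(x_i, eps/2)]
    piecewise syndetically for [i < j].  By compactness two of its terms
    satisfy [rho x_i x_j < eps/2], and the triangle inequality makes [x_j]
    the required point. *)

Section Iterates.
Context {X : Type} {T Tinv : X -> X}.
Hypothesis Tinv_T : forall x, Tinv (T x) = x.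
Hypothesis T_Tinv : forall x, T (Tinv x) = x.

Lemma iterZ_succ k x : iterZ T Tinv (Z.succ k) x = T (iterZ T Tinv k x).
Proof.
  destruct k as [|p|p].
  - reflexivity.
  - replace (Z.succ (Z.pos p)) with (Z.pos (Pos.succ p)) by lia.
    unfold iterZ. now rewrite Pos2Nat.inj_succ.
  - destruct (Pos.succ_pred_or p) as [->| <-].
    + simpl. now rewrite T_Tinv.
    + replace (Z.succ (Z.neg (Pos.succ (Pos.pred p)))) with (Z.neg (Pos.pred p)) by lia.
      unfold iterZ. rewrite Pos2Nat.inj_succ. simpl. now rewrite T_Tinv.
Qed.

Lemma iterZ_pred k x : iterZ T Tinv (Z.pred k) x = Tinv (iterZ T Tinv k x).
Proof. rewrite <- (Z.succ_pred k) at 2. now rewrite iterZ_succ, Tinv_T. Qed.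

Lemma iterZ_add k n x : iterZ T Tinv (k + n) x = iterZ T Tinv n (iterZ T Tinv k x).
Proof.
  revert k x. induction n using Z.peano_ind; intros k x.
  - now rewrite Z.add_0_r.
  - rewrite Z.add_succ_r, !iterZ_succ. now rewrite IHn.
  - rewrite Z.add_pred_r, !iterZ_pred. now rewrite IHn.
Qed.

End Iterates.

Lemma metric_continuous_iter {X : Type} (d : X -> X -> R) (f : X -> X) k :
  metric_continuous d f -> metric_continuous d (Nat.iter k f).
Proof.
  intros hf. induction k as [|k IHk]; intros x eps heps.
  - exists eps. split; [exact heps | intros y hy; exact hy].
  - destruct (hf (Nat.iter k f x) eps heps) as [d1 [hd1 Hf]].
    destruct (IHk x d1 hd1) as [d2 [hd2 Hk]].
    exists d2. split; [exact hd2 | intros y hy; apply Hf, Hk, hy].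
Qed.

Lemma metric_continuous_iterZ {X : Type} (d : X -> X -> R) (T Tinv : X -> X) n :
  metric_continuous d T -> metric_continuous d Tinv -> metric_continuous d (iterZ T Tinv n).
Proof.
  intros hT hTinv. destruct n; simpl.
  - intros x eps heps. exists eps. split; [exact heps | intros y hy; exact hy].
  - now apply metric_continuous_iter.
  - now apply metric_continuous_iter.
Qed.

Lemma piecewise_syndetic_mono (S S' : Z -> Prop) :
  (forall n, S n -> S' n) -> piecewise_syndetic S -> piecewise_syndetic S'.
Proof.
  intros hSS' (S1 & S2 & [L [hL hS1]] & hS2 & hS).
  (* Enlarging both witnesses by [S'] keeps them syndetic and thick, and
     their intersection becomes exactly [S']. *)
  exists (fun n => S1 n \/ S' n), (fun n => S2 n \/ S' n). split; [|split].
  - exists L. split; [exact hL|]. intros a.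
    destruct (hS1 a) as [n [hn hn1]]. exists n. auto.
  - intros L'. destruct (hS2 L') as [a ha]. exists a. auto.
  - intros n. split; [tauto|]. intros [[h1|h] [h2|h']]; auto.
    apply hSS', hS. auto.
Qed.

Lemma piecewise_syndetic_shift (S : Z -> Prop) m :
  piecewise_syndetic S -> piecewise_syndetic (fun k => S (k - m)%Z).
Proof.
  intros (S1 & S2 & [L [hL hS1]] & hS2 & hS).
  exists (fun k => S1 (k - m)%Z), (fun k => S2 (k - m)%Z). split; [|split].
  - exists L. split; [exact hL|]. intros a.
    destruct (hS1 (a - m)%Z) as [n [hn hn1]]. exists (n + m)%Z.
    replace (n + m - m)%Z with n by lia. split; [lia | exact hn1].
  - intros L'. destruct (hS2 L') as [a ha]. exists (a + m)%Z.
    intros n hn. apply ha. lia.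
  - intros n. apply hS.
Qed.

Lemma piecewise_syndetic_nonempty (S : Z -> Prop) : piecewise_syndetic S -> exists n, S n.
Proof.
  intros (S1 & S2 & [L [hL hS1]] & hS2 & hS).
  destruct (hS2 L) as [a ha]. destruct (hS1 a) as [n [hn hn1]].
  exists n. apply hS. auto.
Qed.

Lemma metric_compact_close_pair {X : Type} (d : X -> X -> R) :
  is_metric d -> metric_compact d ->
  forall (u : nat -> X) eps, 0 < eps -> exists i j, (i < j)%nat /\ d (u i) (u j) < eps.
Proof.
  intros hd hcompact u eps heps.
  destruct (hcompact u) as (phi & l & hphi & hlim).
  destruct (hlim (eps / 2)) as [N hN]; [lra|].
  exists (phi N), (phi (S N)). split; [apply hphi; lia|].
  pose proof (hN N (le_n N)) as hfar.
  pose proof (hN (S N) (Nat.le_succ_diag_r N)) as hnear.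
  pose proof (metric_tri d hd (u (phi N)) l (u (phi (S N)))).
  rewrite (metric_sym d hd l) in *. lra.
Qed.

Lemma dependent_choice_on {St : Type} (P : St -> Prop) (next : St -> St -> Prop) s0 :
  P s0 -> (forall s, P s -> exists s', P s' /\ next s s') ->
  exists f : nat -> St, forall n, P (f n) /\ next (f n) (f (S n)).
Proof.
  intros hs0 hnext.
  destruct (functional_choice_imp_functional_dependent_choice choice
              (fun s s' => P s -> P s' /\ next s s')) with (x0 := s0)
    as [f [hf0 hf]].
  { intros s. destruct (classic (P s)) as [hs|hs].
    - destruct (hnext s hs) as [s' hs']. now exists s'.
    - exists s. tauto. }
  assert (hP : forall n, P (f n)).
  { induction n; [now rewrite hf0 | apply hf, IHn]. }
  exists f. intros n. split; [apply hP | apply hf, hP].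
Qed.

Section Visits.
Context {X : Type} (rho : X -> X -> R) (T Tinv : X -> X).
Hypothesis hsys : TDS rho T Tinv.

Definition ps_visits (z x : X) (r : R) : Prop :=
  piecewise_syndetic (fun n => rho (iterZ T Tinv n z) x < r).

Lemma ps_visits_mono z x r r' : r <= r' -> ps_visits z x r -> ps_visits z x r'.
Proof. intros hr. apply piecewise_syndetic_mono. intros n hn. lra. Qed.

Lemma ps_visits_trans y x r :
  ps_visits y x r -> exists d, 0 < d /\ forall z, ps_visits z y d -> ps_visits z x r.
Proof.
  destruct hsys as (hmetric & _ & Tinv_T & T_Tinv & hT & hTinv).
  intros hyx. destruct (piecewise_syndetic_nonempty _ hyx) as [n hn].
  destruct (metric_continuous_iterZ rho T Tinv n hT hTinv y
              (r - rho (iterZ T Tinv n y) x)) as [d [hd hcont]]; [lra|].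
  exists d. split; [exact hd|]. intros z hzy.
  refine (piecewise_syndetic_mono _ _ _ (piecewise_syndetic_shift _ n hzy)).
  intros k hk. rewrite metric_sym in hk by exact hmetric.
  specialize (hcont _ hk).
  rewrite <- iterZ_add, Z.sub_add in hcont by assumption.
  pose proof (metric_tri rho hmetric (iterZ T Tinv k z) (iterZ T Tinv n y) x).
  pose proof (metric_sym rho hmetric (iterZ T Tinv k z) (iterZ T Tinv n y)). lra.
Qed.

Section Chain.
Variables (A : X -> Prop) (r : R).
Hypothesis hA : forall x, A x -> forall eps, 0 < eps -> exists y, A y /\ ps_visits y x eps.
Hypothesis hr : 0 < r.

Lemma ps_visits_refine x d : A x -> 0 < d ->
  exists y d', (A y /\ 0 < d' <= r) /\
    ps_visits y x d /\ forall z, ps_visits z y d' -> ps_visits z x d.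
Proof.
  intros hx hd. destruct (hA x hx d hd) as [y [hy hyx]].
  destruct (ps_visits_trans y x d hyx) as [d' [hd' htrap]].
  exists y, (Rmin d' r). split; [|split; [exact hyx|]].
  - split; [exact hy|]. split; [now apply Rmin_pos | apply Rmin_r].
  - intros z hz. apply htrap. apply ps_visits_mono with (Rmin d' r); [apply Rmin_l | exact hz].
Qed.

(* Each point [x_n] comes with a radius [d_n]; the sets of piecewise syndetic
   visitors of [B(x_n, d_n)] decrease in [n] and [x_(n+1)] lies in the n-th. *)
Lemma ps_visits_chain a0 : A a0 ->
  exists u : nat -> X, (forall n, A (u n)) /\
    forall i j, (i < j)%nat -> ps_visits (u j) (u i) r.
Proof.
  intros ha0.
  destruct (dependent_choice_on (fun s => A (fst s) /\ 0 < snd s <= r)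
    (fun s s' => ps_visits (fst s') (fst s) (snd s) /\
       forall z, ps_visits z (fst s') (snd s') -> ps_visits z (fst s) (snd s))
    (a0, r)) as [f hf].
  { simpl. split; [exact ha0 | lra]. }
  { intros [x d] [hx hd]. simpl in *.
    destruct (ps_visits_refine x d hx (proj1 hd)) as (y & d' & hgood & hnext).
    now exists (y, d'). }
  assert (nested : forall i k z, ps_visits z (fst (f (i + k)%nat)) (snd (f (i + k)%nat)) ->
                              ps_visits z (fst (f i)) (snd (f i))).
  { intros i k z. induction k as [|k IHk].
    - now rewrite Nat.add_0_r.
    - rewrite Nat.add_succ_r. intros hz. apply IHk, hf, hz. }
  exists (fun n => fst (f n)). split; [intros n; apply hf|].
  intros i [|j] hij; [lia|].
  apply ps_visits_mono with (snd (f i)); [apply hf|].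
  apply (nested i (j - i)%nat). replace (i + (j - i))%nat with j by lia. exact (proj1 (proj2 (hf j))).
Qed.

End Chain.
End Visits.

Theorem mainTheorem10 (X : Type) (rho : X -> X -> R) (T Tinv : X -> X)
  (hsys : TDS rho T Tinv) (A : X -> Prop) (hAne : exists a, A a)
  (hA : forall x, A x -> forall eps, 0 < eps ->
     exists y, A y /\ piecewise_syndetic (fun n => rho (iterZ T Tinv n y) x < eps)) :
  forall eps, 0 < eps ->
    exists z, A z /\ piecewise_syndetic (fun n => rho (iterZ T Tinv n z) z < eps).
Proof.
  intros eps heps. destruct hAne as [a0 ha0].
  pose proof hsys as (hmetric & hcompact & _).
  destruct (ps_visits_chain rho T Tinv hsys A (eps / 2) hA ltac:(lra) a0 ha0)
    as [u [huA hu]].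
  destruct (metric_compact_close_pair rho hmetric hcompact u (eps / 2))
    as (i & j & hij & hclose); [lra|].
  exists (u j). split; [apply huA|].
  refine (piecewise_syndetic_mono _ _ _ (hu i j hij)).
  intros n hn. pose proof (metric_tri rho hmetric (iterZ T Tinv n (u j)) (u i) (u j)). lra.
Qed.
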